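(* Let $\mathcal{L}$ be a language with semantic structure $\mathcal{S}=(\Sigma,I)$. (1) $P_{\mathcal{L}}=\mathrm{par}(\mathrm{AD}_{\mathcal{L}})$ and $\mathrm{pad}(P_{\mathcal{L}})=\mathrm{pad}(\mathrm{par}(\mathrm{AD}_{\mathcal{L}}))$. (2) For $P\in\mathrm{Part}(\Sigma)$: $P$ is strongly preserving for $\mathcal{L}$ iff $P\preceq\mathrm{par}(\mathrm{AD}_{\mathcal{L}})$ iff $\mathrm{pad}(P)\sqsubseteq\mathrm{AD}_{\mathcal{L}}$. (3) If $\mathcal{L}$ is closed under infinite logical conjunction, then $\mathrm{AD}_{\mathcal{L}}$ is partitioning if and only if $\mathcal{L}$ is closed under logical negation.
   Context: A language $\mathcal{L}$ has formulae $\varphi::=p\mid f(\varphi_1,\dots,\varphi_n)$, $p$ in a set of atoms, $f$ in a finite set of operators of arity $\ge1$; a semantic structure $\mathcal{S}=(\Sigma,I)$ interprets atoms as subsets of $\Sigma$ and operators as maps $\wp(\Sigma)^n\to\wp(\Sigma)$, giving compositionally the concrete semantics $[\![\varphi]\!]_{\mathcal{S}}\subseteq\Sigma$. Abstract domains of $\wp(\Sigma)_\subseteq$ are given by Galois insertions $(\alpha,\wp(\Sigma),A,\gamma)$ with closure $\mu_A=\gamma\circ\alpha$, identified when closures coincide, and ordered by $A_1\sqsubseteq A_2$ iff $\mu_{A_1}\le\mu_{A_2}$ pointwise. $\mathrm{AD}_{\mathcal{L}}$ is the abstract domain whose closure has as image all intersections of subfamilies of $\{[\![\varphi]\!]_{\mathcal{S}}\mid\varphi\in\mathcal{L}\}$.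 $\mathrm{Part}(\Sigma)$ is ordered by $P_1\preceq P_2$ iff each block of $P_1$ lies in a block of $P_2$. $\mathrm{pad}(P)$ is the abstract domain with closure $S\mapsto\bigcup\{B\in P\mid B\cap S\ne\varnothing\}$; $A$ is partitioning if it equals $\mathrm{pad}(P)$ for some $P$. $\mathrm{par}(A)$ is the partition into classes of $s\equiv s'\iff\alpha(\{s\})=\alpha(\{s'\})$. $P_{\mathcal{L}}$ is the partition induced by $s\equiv_{\mathcal{L}}s'\iff\forall\varphi.\,(s\in[\![\varphi]\!]_{\mathcal{S}}\Leftrightarrow s'\in[\![\varphi]\!]_{\mathcal{S}})$; $P$ is strongly preserving for $\mathcal{L}$ iff $P\preceq P_{\mathcal{L}}$. $\mathcal{L}$ is closed under infinite logical conjunction if for every $\Phi\subseteq\mathcal{L}$ (including $\varnothing$) some $\psi$ has $[\![\psi]\!]_{\mathcal{S}}=\bigcap_{\varphi\in\Phi}[\![\varphi]\!]_{\mathcal{S}}$; closed under negation if for every $\varphi$ some $\psi$ has $[\![\psi]\!]_{\mathcal{S}}=\Sigma\setminus[\![\varphi]\!]_{\mathcal{S}}$. *)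

From mathcomp Require Import all_boot.
From mathcomp Require Import classical_sets.

Set Implicit Arguments.
Unset Strict Implicit.
Unset Printing Implicit Defensive.

Local Open Scope classical_set_scope.

Record language := Language {
  atom : Type;
  op : finType;
  arity : op -> nat;
  arity_pos : forall f, 0 < arity f }.

Inductive formula (L : language) : Type :=
  | FAtom : atom L -> formula L
  | FOp : forall f : op L, ('I_(@arity L f) -> formula L) -> formula L.

Record structure (L : language) := Structure {
  state : Type;
  Iatom : atom L -> set state;
  Iop : forall f : op L, ('I_(@arity L f) -> set state) -> set state }.

Fixpoint sem {L : language} (S : structure L) (phi : formula L) : set (state S) :=
  match phi with
  | FAtom p => @Iatom L S p
  | FOp f args => @Iop L S f (fun i => @sem L S (args i))
  end.
Arguments sem {L} S phi.

(* An abstract domain (up to the identification "same closure") is its closure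
   mu_A = gamma o alpha : set Sigma -> set Sigma. *)
Definition absdom (T : Type) := set T -> set T.

Definition absdom_le (T : Type) (A1 A2 : absdom T) : Prop :=
  forall X, A1 X `<=` A2 X.

Definition moore_closure (T : Type) (M : set (set T)) : absdom T :=
  fun X => [set s | forall Y, M Y -> X `<=` Y -> Y s].

Definition intersections (T : Type) (F : set (set T)) : set (set T) :=
  [set X | exists G : set (set T), G `<=` F /\ X = [set s | forall Y, G Y -> Y s]].

Definition AD (L : language) (S : structure L) : absdom (state S) :=
  moore_closure (intersections [set sem S phi | phi in [set: formula L]]).

Definition is_partition (T : Type) (P : set (set T)) : Prop :=
  [/\ (forall B, P B -> B !=set0),
      (forall B C, P B -> P C -> B `&` C !=set0 -> B = C) &
      (forall s, exists B, P B /\ B s)].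

Definition part_le (T : Type) (P1 P2 : set (set T)) : Prop :=
  forall B, P1 B -> exists C, P2 C /\ B `<=` C.

Definition classes (T : Type) (R : T -> T -> Prop) : set (set T) :=
  [set B | exists s, B = [set s' | R s s']].

Definition pad (T : Type) (P : set (set T)) : absdom T :=
  fun X => [set s | exists B, [/\ P B, B `&` X !=set0 & B s]].

Definition partitioning (T : Type) (A : absdom T) : Prop :=
  exists P, is_partition P /\ A = pad P.

(* par(A): classes of s == s' iff alpha({s}) = alpha({s'}); since gamma is
   injective in a Galois insertion, this is mu_A({s}) = mu_A({s'}). *)
Definition par (T : Type) (A : absdom T) : set (set T) :=
  classes (fun s s' => A [set s] = A [set s']).

Definition P_L (L : language) (S : structure L) : set (set (state S)) :=
  classes (fun s s' => forall phi : formula L, sem S phi s <-> sem S phi s').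

Arguments P_L {L} S.
Arguments AD {L} S.

Definition strongly_preserving (L : language) (S : structure L)
  (P : set (set (state S))) : Prop := part_le P (P_L S).

(* Closure under infinite logical conjunction (including the empty one). *)
Definition closed_conj (L : language) (S : structure L) : Prop :=
  forall Phi : set (formula L), exists psi : formula L,
    sem S psi = [set s | forall phi, Phi phi -> sem S phi s].

Definition closed_neg (L : language) (S : structure L) : Prop :=
  forall phi : formula L, exists psi : formula L, sem S psi = ~` sem S phi.

From mathcomp Require Import all_boot.
From mathcomp Require Import boolp classical_sets.

(* Everything depends on the language only through the family of denotations
   [[phi]], and AD_L is the Moore closure of that family: mu({s}) is the set of
   states satisfying every formula that s satisfies, so two states have the
   same abstract singleton exactly when they are logically equivalent, and
   pad(P) <= AD_L exactly when each block of P consists of equivalent states.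
   Under infinite conjunction every mu(X) is itself a denotation. A
   partitioning closure fixes the complement of each closed set, which yields
   negation; conversely, with negation the specialisation preorder is
   symmetric, so mu(X) is the union of the equivalence classes meeting X. *)

Set Implicit Arguments.
Unset Strict Implicit.
Unset Printing Implicit Defensive.
Local Open Scope classical_set_scope.

Lemma moore_closure_intersections (T : Type) (F : set (set T)) :
  moore_closure (intersections F) = moore_closure F.
Proof.
apply/funext => X; apply/seteqP; split => s clXs.
- move=> Y FY XY; apply: clXs XY.
  exists [set Y]; split; first by move=> _ ->.
  by apply/seteqP; split => [t Yt _ -> | t]; [|apply].
- by move=> _ [G [GF ->]] XG Y GY; apply: clXs (GF _ GY) _ => t /XG; apply.
Qed.

Section FamilyClosure.
Variables (T I : Type) (f : I -> set T).

Definition indist (s s' : T) := forall i, f i s <-> f i s'.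

Definition bigcap_closed :=
  forall J : set I, exists j, f j = [set s | forall i, J i -> f i s].

Definition setC_closed := forall i, exists j, f j = ~` f i.

Local Notation cl := (moore_closure (range f)).

Lemma moore_closureE X s : cl X s <-> forall i, X `<=` f i -> f i s.
Proof.
split=> [clXs i Xfi|clXs _ [i _ <-]]; last exact: clXs.
by apply: clXs Xfi; exists i.
Qed.

Lemma moore_closure_set1 s t : cl [set s] t <-> forall i, f i s -> f i t.
Proof.
rewrite moore_closureE; split=> st i fis; first by apply: st => _ ->.
by apply: st; apply: fis.
Qed.

Lemma moore_closure_set1_eq s s' : cl [set s] = cl [set s'] <-> indist s s'.
Proof.
split=> [E i|ss'].
- have /moore_closure_set1 s's : cl [set s'] s by rewrite -E; apply/moore_closure_set1.
  have /moore_closure_set1 ss' : cl [set s] s' by rewrite E; apply/moore_closure_set1.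
  by split; [apply: ss'|apply: s's].
apply/funext => t; apply/propext; rewrite !moore_closure_set1.
by split=> st i fi; apply: st; apply/(ss' i).
Qed.

Lemma par_moore_closure : par cl = classes indist.
Proof.
by apply/funext => B; apply/propext; split=> -[s ->]; exists s;
  apply/funext => t; apply/propext; rewrite /= moore_closure_set1_eq.
Qed.

Lemma classes_indist_partition : is_partition (classes indist).
Proof.
split=> [_ [s ->]|_ _ [s ->] [s' ->] [x [sx s'x]]|s]; first by exists s.
- by apply/funext => t; apply/propext; split=> st i;
    move: (sx i) (s'x i) (st i); tauto.
- by exists [set t | indist s t]; split; [exists s|].
Qed.

Lemma part_le_pad_moore_closure P : is_partition P ->
  part_le P (classes indist) <-> absdom_le (pad P) cl.
Proof.
move=> [Pne _ _]; split=> [PL X s [B [PB [x [Bx Xx]] Bs]]|padcl B PB].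
- have [_ [[s0 ->] BC]] := PL B PB.
  by apply/moore_closureE => i /(_ x Xx) /(BC x Bx) /BC; apply.
have [b Bb] := Pne B PB.
have padB s t : B s -> B t -> cl [set s] t.
  by move=> Bs Bt; apply: padcl; exists B; split => //; exists s.
exists [set t | indist b t]; split; first by exists b.
move=> s Bs i.
have /moore_closure_set1 bs := padB b s Bb Bs.
have /moore_closure_set1 sb := padB s b Bs Bb.
by split; [apply: bs|apply: sb].
Qed.

Lemma moore_closure_range_fixed i : cl (f i) = f i.
Proof.
apply/seteqP; split=> s; first by move/moore_closureE; apply.
by move=> fis; apply/moore_closureE => j; apply.
Qed.

Lemma moore_closure_in_range X : bigcap_closed -> exists j, cl X = f j.
Proof.
move=> capf; have [j fj] := capf [set i | X `<=` f i].
by exists j; rewrite fj; apply/funext => s; apply/propext; rewrite moore_closureE.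
Qed.

Lemma pad_setC (P : set (set T)) (Y : set T) : is_partition P ->
  pad P Y `<=` Y -> pad P (~` Y) = ~` Y.
Proof.
move=> [_ _ Pcov] padY; apply/seteqP; split=> [t [B [PB [x [Bx nYx]] Bt]] Yt|t nYt].
- by apply: nYx; apply: padY; exists B; split => //; exists t.
- by have [B [PB Bt]] := Pcov t; exists B; split => //; exists t.
Qed.

Lemma partitioning_setC_closed : bigcap_closed -> partitioning cl -> setC_closed.
Proof.
move=> capf [P [Ppart clP]] i.
have [j clC] := moore_closure_in_range (~` f i) capf.
by exists j; rewrite -clC clP pad_setC // -clP moore_closure_range_fixed.
Qed.

(* With complements, a formula false at s but true at t has its negation
   true at s, so specialisation is symmetric. *)
Lemma indist_setC_closed s t : setC_closed ->
  (forall i, f i s -> f i t) -> indist s t.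
Proof.
move=> negf st i; split; first exact: st.
move=> fit; apply: contrapT => nfis; have [j fj] := negf i.
by have := st j; rewrite fj; apply.
Qed.

Lemma moore_closure_pad_classes : bigcap_closed -> setC_closed ->
  cl = pad (classes indist).
Proof.
move=> capf negf; apply/funext => X; apply/seteqP; split=> s; last first.
  move=> [_ [[s0 ->] [x [s0x Xx]] s0s]].
  by apply/moore_closureE => i /(_ x Xx) /s0x /s0s.
move=> /moore_closureE clXs; apply: contrapT => npad.
have [j fj] := capf [set i | f i s].
have [k fk] := negf j.
suff /clXs : X `<=` f k by rewrite fk fj; apply.
move=> x Xx; rewrite fk fj => fx; apply: npad.
exists [set t | indist s t]; split; first by exists s.
  by exists x; split=> //; apply: indist_setC_closed.
by move=> i.
Qed.

Lemma partitioning_moore_closure : bigcap_closed ->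
  partitioning cl <-> setC_closed.
Proof.
move=> capf; split; first exact: partitioning_setC_closed.
move=> negf; exists (classes indist); split; first exact: classes_indist_partition.
exact: moore_closure_pad_classes.
Qed.

End FamilyClosure.

Theorem proposition5p6 (L : language) (S : structure L) :
  [/\ P_L S = par (AD S) /\ pad (P_L S) = pad (par (AD S)),
      (forall P : set (set (state S)), is_partition P ->
         (strongly_preserving P <-> part_le P (par (AD S))) /\
         (part_le P (par (AD S)) <-> absdom_le (pad P) (AD S)))
    & (closed_conj S -> (partitioning (AD S) <-> closed_neg S))].
Proof.
rewrite /strongly_preserving.
have -> : AD S = moore_closure (range (sem S)) by exact: moore_closure_intersections.
have -> : P_L S = classes (indist (sem S)) by [].
rewrite par_moore_closure; split=> // [P Ppart|].
- by split; last exact: part_le_pad_moore_closure.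
- exact: partitioning_moore_closure.
Qed.
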